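(* Let $\mathcal{C}=\mathrm{CSS}(C_X,C_Z)$ be a quantum Tanner code over $\mathbb{F}_q$ built from a group $G$, generating sets $A,B$ with $|A|=|B|=\Delta$, and inner codes $C_A\subseteq\mathbb{F}_q^A$, $C_B\subseteq\mathbb{F}_q^B$, such that (1) the all-ones vector lies in $C_A$ and the all-ones vector lies in $C_B^\perp$, and (2) $n=|G||A||B|$ is relatively prime to $q$. Then the all-ones vector $\mathbf{1}\in\mathbb{F}_q^Q$ lies in $C_Z\setminus C_X^\perp$ and in $C_X\setminus C_Z^\perp$.
   Context: Quantum Tanner code: $G$ is a finite group and $A,B\subseteq G$ with $A=A^{-1}$, $B=B^{-1}$, $|A|=|B|=\Delta$. The face set is $Q=G\times A\times B$, where the face $(g,a,b)$ has vertices $(g,00),(ag,01),(gb,10),(agb,11)$ in $V=G\times\{0,1\}^2$; $n=|Q|$. For each vertex $v$, let $Q(v)$ be the set of faces containing $v$, identified with $A\times B$ by: for $v=(h,00)$, $(a,b)\mapsto(h,a,b)$; for $v=(h,01)$, $(a,b)\mapsto(a^{-1}h,a,b)$; for $v=(h,10)$, $(a,b)\mapsto(hb^{-1},a,b)$; for $v=(h,11)$, $(a,b)\mapsto(a^{-1}hb^{-1},a,b)$. For $x\in\mathbb{F}_q^Q$, its local view $x|_{Q(v)}\in\mathbb{F}_q^{A\times B}$ is the restriction under this identification. For linear codes $C_1\subseteq\mathbb{F}_q^{A}$, $C_2\subseteq\mathbb{F}_q^{B}$, the tensor code $C_1\otimes C_2\subseteq\mathbb{F}_q^{A\times B}$ consists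 of matrices with all columns in $C_1$ and all rows in $C_2$; $(C_1\otimes C_2)^\perp=C_1^\perp\otimes\mathbb{F}_q^B+\mathbb{F}_q^A\otimes C_2^\perp$. Then $C_X=\{x\in\mathbb{F}_q^Q: x|_{Q(v)}\in(C_A\otimes C_B)^\perp\ \forall v\in G\times\{00,11\}\}$ and $C_Z=\{x\in\mathbb{F}_q^Q: x|_{Q(v)}\in(C_A^\perp\otimes C_B^\perp)^\perp\ \forall v\in G\times\{01,10\}\}$; one has $C_X^\perp\subseteq C_Z$. Duals are with respect to the standard bilinear form. *)

From HB Require Import structures.
From mathcomp Require Import all_boot all_order all_algebra all_fingroup.
Set Implicit Arguments. Unset Strict Implicit. Unset Printing Implicit Defensive.
Import GRing.Theory.
Local Open Scope ring_scope.

Section QTanner.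
Variable F : finFieldType.

Definition dotp (T : finType) (x y : {ffun T -> F}) : F := \sum_i x i * y i.

Definition ones (T : finType) : {ffun T -> F} := [ffun _ => 1].

Definition lin_code (T : finType) (C : {set {ffun T -> F}}) : Prop :=
  [ffun _ => 0] \in C /\
  forall (c : F) x y, x \in C -> y \in C -> [ffun i => c * x i + y i] \in C.

Definition dual (T : finType) (C : {set {ffun T -> F}}) : {set {ffun T -> F}} :=
  [set y | [forall x in C, dotp x y == 0]].

Definition tensor (T1 T2 : finType) (C1 : {set {ffun T1 -> F}})
    (C2 : {set {ffun T2 -> F}}) : {set {ffun (T1 * T2)%type -> F}} :=
  [set M : {ffun (T1 * T2)%type -> F} | [forall b, [ffun a => M (a, b)] \in C1] &&
           [forall a, [ffun b => M (a, b)] \in C2]].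

Variable gT : finGroupType.
Variables A B : {set gT}.

Notation TA := {a : gT | a \in A}.
Notation TB := {b : gT | b \in B}.
(* faces Q = G x A x B; the face (g,a,b) has vertices (g,00),(ag,01),(gb,10),(agb,11) *)
Notation Face := (gT * TA * TB)%type.

(* local views at the vertices (h,00), (h,01), (h,10), (h,11) *)
Definition view00 (h : gT) (x : {ffun Face -> F}) : {ffun (TA * TB)%type -> F} :=
  [ffun ab => x (h, ab.1, ab.2)].
Definition view01 (h : gT) (x : {ffun Face -> F}) : {ffun (TA * TB)%type -> F} :=
  [ffun ab => x (((val ab.1)^-1 * h)%g, ab.1, ab.2)].
Definition view10 (h : gT) (x : {ffun Face -> F}) : {ffun (TA * TB)%type -> F} :=
  [ffun ab => x ((h * (val ab.2)^-1)%g, ab.1, ab.2)].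
Definition view11 (h : gT) (x : {ffun Face -> F}) : {ffun (TA * TB)%type -> F} :=
  [ffun ab => x (((val ab.1)^-1 * h * (val ab.2)^-1)%g, ab.1, ab.2)].

Variable CA : {set {ffun TA -> F}}.
Variable CB : {set {ffun TB -> F}}.

Definition CX : {set {ffun Face -> F}} :=
  [set x | [forall h, (view00 h x \in dual (tensor CA CB)) &&
                      (view11 h x \in dual (tensor CA CB))]].
Definition CZ : {set {ffun Face -> F}} :=
  [set x | [forall h, (view01 h x \in dual (tensor (dual CA) (dual CB))) &&
                      (view10 h x \in dual (tensor (dual CA) (dual CB)))]].
End QTanner.

From HB Require Import structures.
From mathcomp Require Import all_boot all_order all_algebra all_fingroup.
From mathcomp Require Import cyclic finfield.
Set Implicit Arguments. Unset Strict Implicit. Unset Printing Implicit Defensive.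
Import GRing.Theory FinRing.Theory.
Local Open Scope ring_scope.

(* Every local view of the all-ones vector is again all-ones, and pairing a
   tensor codeword with all-ones sums its rows (or columns); a row lying in C2
   sums to 0 when all-ones is in the dual of C2, and a column lying in the dual
   of C1 sums to 0 when all-ones is in C1.  Hence all-ones is in CX and CZ.
   It is self-orthogonal only if n = |G||A||B| vanishes in F, which coprimality
   with q rules out; so it is not in the dual of either code. *)

Section Dot.
Variable F : finFieldType.

Lemma dotp_onesr (T : finType) (x : {ffun T -> F}) :
  dotp x (ones F T) = \sum_i x i.
Proof. by apply: eq_bigr => i _; rewrite ffunE mulr1. Qed.

Lemma dotp_ones (T : finType) : dotp (ones F T) (ones F T) = #|T|%:R.
Proof.
by rewrite dotp_onesr (eq_bigr (fun=> 1)) ?sumr_const // => i _; rewrite ffunE.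
Qed.

Lemma dotp_onesr_pair (T1 T2 : finType) (M : {ffun (T1 * T2)%type -> F}) :
  dotp M (ones F _) = \sum_a \sum_b M (a, b).
Proof. by rewrite dotp_onesr pair_big; apply: eq_bigr => -[]. Qed.

Lemma notin_dual_self (T : finType) (C : {set {ffun T -> F}}) x :
  x \in C -> dotp x x != 0 -> x \notin dual C.
Proof.
move=> xC nx0; rewrite inE negb_forall; apply/existsP; exists x.
by rewrite negb_imply xC.
Qed.

Lemma ones_dual_tensor (T1 T2 : finType)
    (C1 : {set {ffun T1 -> F}}) (C2 : {set {ffun T2 -> F}}) :
  ones F T2 \in dual C2 -> ones F _ \in dual (tensor C1 C2).
Proof.
rewrite inE => /forall_inP dual_ones2.
rewrite inE; apply/forall_inP => M; rewrite inE => /andP [_ /forallP rowsM].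
rewrite dotp_onesr_pair; apply/eqP/big1 => a _.
rewrite -[RHS](eqP (dual_ones2 _ (rowsM a))) dotp_onesr.
by apply: eq_bigr => b _; rewrite ffunE.
Qed.

Lemma ones_dual_tensor_dual (T1 T2 : finType)
    (C1 : {set {ffun T1 -> F}}) (C2 : {set {ffun T2 -> F}}) :
  ones F T1 \in C1 -> ones F _ \in dual (tensor (dual C1) C2).
Proof.
move=> ones1.
rewrite inE; apply/forall_inP => M; rewrite inE => /andP [/forallP colsM _].
rewrite dotp_onesr_pair exchange_big; apply/eqP/big1 => b _.
have /[!inE] /forall_inP /(_ _ ones1) /eqP col_orth := colsM b.
rewrite -[RHS]col_orth /dotp.
by apply: eq_bigr => a _; rewrite !ffunE mul1r.
Qed.

(* Lagrange in the additive group of F: 1 *+ #|F| = 0. *)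
Lemma natf_card_finField : #|F|%:R = 0 :> F.
Proof. by apply/eqP; rewrite -zmodXgE -cardsT expg_cardG // inE. Qed.

Lemma natf_neq0_coprime_card (n : nat) : coprime n #|F| -> n%:R != 0 :> F.
Proof.
move=> copn; have [p p_pr pcharFp] := finPcharP F.
apply: contraTneq p_pr => n0.
have p_dvd_n : (p %| n)%N by rewrite (dvdn_pcharf pcharFp) n0.
have p_dvd_q : (p %| #|F|)%N by rewrite (dvdn_pcharf pcharFp) natf_card_finField.
have : (p %| gcdn n #|F|)%N by rewrite dvdn_gcd p_dvd_n p_dvd_q.
by rewrite (eqP copn) dvdn1 => /eqP ->.
Qed.

End Dot.

Theorem proposition5p1 (F : finFieldType) (gT : finGroupType) (A B : {set gT})
  (Delta : nat)
  (CA : {set {ffun {a : gT | a \in A} -> F}})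
  (CB : {set {ffun {b : gT | b \in B} -> F}}) :
  (forall a, a \in A -> (a^-1)%g \in A) ->
  (forall b, b \in B -> (b^-1)%g \in B) ->
  #|A| = Delta -> #|B| = Delta ->
  lin_code CA -> lin_code CB ->
  ones F _ \in CA -> ones F _ \in dual CB ->
  coprime (#|gT| * #|A| * #|B|) #|F| ->
  let one := ones F (gT * {a : gT | a \in A} * {b : gT | b \in B})%type in
  (one \in CZ CA CB) && (one \notin dual (CX CA CB)) /\
  (one \in CX CA CB) && (one \notin dual (CZ CA CB)).
Proof.
move=> _ _ _ _ _ _ onesA onesB copn one.
have inX : one \in CX CA CB.
  rewrite inE; apply/forallP => h.
  have -> : view00 h one = ones F _ by apply/ffunP => ab; rewrite !ffunE.
  have -> : view11 h one = ones F _ by apply/ffunP => ab; rewrite !ffunE.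
  by rewrite ones_dual_tensor.
have inZ : one \in CZ CA CB.
  rewrite inE; apply/forallP => h.
  have -> : view01 h one = ones F _ by apply/ffunP => ab; rewrite !ffunE.
  have -> : view10 h one = ones F _ by apply/ffunP => ab; rewrite !ffunE.
  by rewrite ones_dual_tensor_dual.
have one_anisotropic : dotp one one != 0.
  by rewrite dotp_ones !card_prod !card_sig; apply: natf_neq0_coprime_card.
by rewrite inX inZ !notin_dual_self.
Qed.
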